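(* Let $X \subseteq \mathbb{Z}^d$ be a finite lattice-convex set, let $H$ be a hiding set for $X$, and assume there exists $h \in H \setminus \mathrm{obs}(X)$. Then, for every $y \in \mathrm{obs}(X) \cap \mathrm{conv}(\{h\} \cup X)$, the set $(H \setminus \{h\}) \cup \{y\}$ is a hiding set for $X$. In particular, there is a maximum size hiding set for $X$ contained in $\mathrm{obs}(X)$.
   Context: A set $X \subseteq \mathbb{Z}^d$ is lattice-convex if $\mathrm{conv}(X) \cap \mathbb{Z}^d = X$. An observer of $X$ is a point $z \in \mathbb{Z}^d \setminus X$ such that $\mathrm{conv}(X \cup \{z\}) \cap \mathbb{Z}^d = X \cup \{z\}$; $\mathrm{obs}(X)$ is the set of observers. A set $H \subseteq (\mathrm{aff}(X) \cap \mathbb{Z}^d) \setminus X$ is a hiding set for $X$ if for all distinct $x,y \in H$ one has $\mathrm{conv}(\{x,y\}) \cap \mathrm{conv}(X) \ne \emptyset$. *)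

(* Points of Z^d are row vectors 'rV[int]_d; convexity is
   computed in R^d for an arbitrary real field R (R : realFieldType). *)
From HB Require Import structures.
From mathcomp Require Import all_boot all_order all_algebra.
From mathcomp Require Import finmap.
Set Implicit Arguments. Unset Strict Implicit. Unset Printing Implicit Defensive.
Import Order.TTheory GRing.Theory Num.Theory.
Local Open Scope ring_scope.

Section Defs.
Variable R : realFieldType.
Variable d : nat.

Definition emb (z : 'rV[int]_d) : 'rV[R]_d := map_mx (fun a : int => a%:~R) z.

Definition embset (A : 'rV[int]_d -> Prop) : 'rV[R]_d -> Prop :=
  fun p => exists2 z, A z & p = emb z.

Definition conv (S : 'rV[R]_d -> Prop) (p : 'rV[R]_d) : Prop :=
  exists (n : nat) (v : 'I_n -> 'rV[R]_d) (l : 'I_n -> R),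
    [/\ forall i, S (v i), forall i, 0 <= l i, \sum_i l i = 1
      & p = \sum_i l i *: v i].

Definition aff (S : 'rV[R]_d -> Prop) (p : 'rV[R]_d) : Prop :=
  exists (n : nat) (v : 'I_n -> 'rV[R]_d) (l : 'I_n -> R),
    [/\ forall i, S (v i), \sum_i l i = 1 & p = \sum_i l i *: v i].

Definition lattice_convex (X : 'rV[int]_d -> Prop) : Prop :=
  forall z, conv (embset X) (emb z) <-> X z.

Definition observer (X : 'rV[int]_d -> Prop) (z : 'rV[int]_d) : Prop :=
  ~ X z /\ lattice_convex (fun w => X w \/ w = z).

Definition hiding (X H : 'rV[int]_d -> Prop) : Prop :=
  (forall x, H x -> aff (embset X) (emb x) /\ ~ X x) /\
  (forall x y, H x -> H y -> x <> y ->
     exists p, conv (embset (fun w => w = x \/ w = y)) p /\ conv (embset X) p).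

End Defs.

From HB Require Import structures.
From mathcomp Require Import all_boot all_order all_algebra.
From mathcomp Require Import finmap ring lra.
From Stdlib Require Import Classical.
Set Implicit Arguments. Unset Strict Implicit. Unset Printing Implicit Defensive.
Import Order.TTheory GRing.Theory Num.Theory.
Local Open Scope ring_scope.

(* Write y = lam h + (1 - lam) c with c in conv X; lam > 0 since y is a
   lattice point outside X.  For x in H the segment [x, h] meets conv X at
   some p, and inside the triangle x h c the segment [x, y] crosses [p, c],
   which lies in conv X: so y can replace h.  An observer y in conv({h} u X)
   exists: if h is not one, some lattice point z of conv({h} u X) lies
   outside X u {h}, and conv({z} u X) is contained in conv({h} u X) but misses
   h; as conv({h} u X) has finitely many lattice points, iterating ends at an
   observer.  Such a y is never in H (otherwise y itself would lie in conv X),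
   so the exchange keeps |H|, and exchanging the non-observers of H one at a
   time gives a hiding set of observers of the same size. *)

Section ConvexHull.
Variable R : realFieldType.
Variable d : nat.
Notation V := 'rV[R]_d.

Lemma mem_conv (S : V -> Prop) v : S v -> conv S v.
Proof.
move=> Sv; exists 1%N, (fun _ => v), (fun _ => 1); split => //.
- by rewrite big_ord1.
- by rewrite big_ord1 scale1r.
Qed.

Lemma conv_sub (S T : V -> Prop) p :
  (forall q, S q -> T q) -> conv S p -> conv T p.
Proof. by move=> ST [n [v [l [Sv l0 l1 ->]]]]; exists n, v, l; split=> // i; apply: ST. Qed.

Lemma conv_aff (S : V -> Prop) p : conv S p -> aff S p.
Proof. by move=> [n [v [l [Sv _ l1 ->]]]]; exists n, v, l. Qed.

Lemma combination_cat n m (v : 'I_n -> V) (w : 'I_m -> V)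
    (l : 'I_n -> R) (k : 'I_m -> R) (a b : R) :
  exists (u : 'I_(n + m) -> V) (c : 'I_(n + m) -> R),
  [/\ forall i, (exists j, u i = v j /\ c i = a * l j) \/
                (exists j, u i = w j /\ c i = b * k j),
      \sum_i c i = a * \sum_i l i + b * \sum_i k i &
      \sum_i c i *: u i = a *: \sum_i l i *: v i + b *: \sum_i k i *: w i].
Proof.
pose u i := match split i with inl j => v j | inr j => w j end.
pose c i := match split i with inl j => a * l j | inr j => b * k j end.
have cL j : c (lshift m j) = a * l j by rewrite /c (unsplitK (inl j)).
have cR j : c (rshift n j) = b * k j by rewrite /c (unsplitK (inr j)).
have uL j : u (lshift m j) = v j by rewrite /u (unsplitK (inl j)).
have uR j : u (rshift n j) = w j by rewrite /u (unsplitK (inr j)).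
exists u, c; split.
- by move=> i; rewrite /u /c; case: (split i) => j; [left | right]; exists j.
- rewrite big_split_ord !mulr_sumr.
  by congr (_ + _); apply: eq_bigr => i _; rewrite ?cL ?cR.
- rewrite big_split_ord !scaler_sumr.
  by congr (_ + _); apply: eq_bigr => i _; rewrite ?cL ?cR ?uL ?uR scalerA.
Qed.

Lemma conv_convex (S : V -> Prop) t p q : 0 <= t <= 1 -> conv S p -> conv S q ->
  conv S (t *: p + (1 - t) *: q).
Proof.
move=> /andP[t0 t1] [n [v [l [Sv l0 l1 ->]]]] [m [w [k [Sw k0 k1 ->]]]].
have [u [c [uc sc su]]] := combination_cat v w l k t (1 - t).
exists (n + m)%N, u, c; split.
- by move=> i; case: (uc i) => -[j [-> _]].
- by move=> i; case: (uc i) => -[j [_ ->]]; rewrite mulr_ge0 ?subr_ge0.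
- by rewrite sc l1 k1 !mulr1 addrC subrK.
- by rewrite su.
Qed.

Lemma aff_affine (S : V -> Prop) t p q : aff S p -> aff S q ->
  aff S (t *: p + (1 - t) *: q).
Proof.
move=> [n [v [l [Sv l1 ->]]]] [m [w [k [Sw k1 ->]]]].
have [u [c [uc sc su]]] := combination_cat v w l k t (1 - t).
exists (n + m)%N, u, c; split.
- by move=> i; case: (uc i) => -[j [-> _]].
- by rewrite sc l1 k1 !mulr1 addrC subrK.
- by rewrite su.
Qed.

Lemma conv_ind (S P : V -> Prop) :
  (forall v, S v -> P v) ->
  (forall t u w, 0 <= t <= 1 -> P u -> P w -> P (t *: u + (1 - t) *: w)) ->
  forall p, conv S p -> P p.
Proof.
move=> SP PC p [n [v [l [Sv l0 l1 ->]]]].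
elim: n v l Sv l0 l1 => [|n IH] v l Sv l0 l1.
  by move: l1; rewrite big_ord0 => /eqP; rewrite eq_sym oner_eq0.
rewrite big_ord_recl; move: l1; rewrite big_ord_recl => l1.
set r := \sum_(i < n) l (lift ord0 i) in l1 *.
have rE : r = 1 - l ord0 by rewrite -l1 addrC addKr.
have [r0|rn0] := eqVneq r 0.
  have l0i i : l (lift ord0 i) = 0 by apply: (psumr_eq0P _ r0).
  rewrite big1 => [|i _]; last by rewrite l0i scale0r.
  have -> : l ord0 = 1 by rewrite -l1 r0 addr0.
  by rewrite scale1r addr0; apply: SP.
have -> : \sum_(i < n) l (lift ord0 i) *: v (lift ord0 i) =
  (1 - l ord0) *: \sum_(i < n) (l (lift ord0 i) / r) *: v (lift ord0 i).
  rewrite scaler_sumr; apply: eq_bigr => i _.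
  by rewrite scalerA -rE mulrCA divff // mulr1.
apply: PC; [| exact: SP |].
- by rewrite l0 /= -subr_ge0 -rE sumr_ge0.
- apply: IH => [i | i |]; first exact: Sv.
  + by rewrite divr_ge0 ?sumr_ge0.
  + by rewrite -mulr_suml divff.
Qed.

Lemma conv_singleton (w p : V) : conv (fun q => q = w) p -> p = w.
Proof.
apply: (conv_ind (P := fun p => p = w)) => // t u w' _ -> ->.
by apply/rowP => j; rewrite !mxE; ring.
Qed.

Lemma join_point_convex (S : V -> Prop) (c0 a c1 c2 : V) t l1 l2 :
  conv S c0 -> 0 <= t <= 1 -> 0 <= l1 <= 1 -> 0 <= l2 <= 1 ->
  conv S c1 -> conv S c2 ->
  exists lam c, [/\ 0 <= lam <= 1, conv S c &
    t *: (l1 *: a + (1 - l1) *: c1) + (1 - t) *: (l2 *: a + (1 - l2) *: c2) =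
    lam *: a + (1 - lam) *: c].
Proof.
move=> C0 /andP[t0 t1] /andP[a1 b1] /andP[a2 b2] C1 C2.
set lam := t * l1 + (1 - t) * l2.
have [lam1|lamn1] := eqVneq lam 1.
  have ex : t * (1 - l1) = 0 by rewrite /lam in lam1; nra.
  have ey : (1 - t) * (1 - l2) = 0 by rewrite /lam in lam1; nra.
  exists 1, c0; split=> //; first by rewrite ler01 lexx.
  apply/rowP => j; rewrite !mxE.
  transitivity (lam * a 0 j + t * (1 - l1) * c1 0 j + (1 - t) * (1 - l2) * c2 0 j).
    by rewrite /lam; ring.
  by rewrite lam1 ex ey; ring.
have D0 : 0 < 1 - lam.
  by rewrite lt_neqAle eq_sym subr_eq0 eq_sym lamn1 /= /lam; nra.
set s := t * (1 - l1) / (1 - lam).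
have s01 : 0 <= s <= 1.
  apply/andP; split; first by rewrite divr_ge0 ?(ltW D0) // mulr_ge0 ?subr_ge0.
  by rewrite /s ler_pdivrMr // mul1r /lam; nra.
exists lam, (s *: c1 + (1 - s) *: c2); split.
- by rewrite /lam; apply/andP; split; nra.
- exact: conv_convex.
- by apply/rowP => j; rewrite !mxE /s /lam; field; rewrite gt_eqF.
Qed.

Lemma conv_setU1_decomp (S : V -> Prop) (c0 a p : V) : S c0 ->
  conv (fun q => q = a \/ S q) p ->
  exists lam c, [/\ 0 <= lam <= 1, conv S c & p = lam *: a + (1 - lam) *: c].
Proof.
move=> /mem_conv C0; move: p; apply: conv_ind => [q [->|Sq] | t u w t01].
- exists 1, c0; split => //; first by rewrite ler01 lexx.
  by rewrite subrr scale0r addr0 scale1r.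
- exists 0, q; split; [by rewrite lexx ler01 | exact: mem_conv |].
  by rewrite scale0r add0r subr0 scale1r.
- move=> [l1 [c1 [l1b C1 ->]]] [l2 [c2 [l2b C2 ->]]].
  exact: join_point_convex C0 t01 l1b l2b C1 C2.
Qed.

Lemma conv_segment (u w p : V) : conv (fun q => q = u \/ q = w) p ->
  exists2 mu, 0 <= mu <= 1 & p = mu *: u + (1 - mu) *: w.
Proof.
move=> /(conv_setU1_decomp (c0 := w) erefl) [mu [c [mu01 /conv_singleton -> ->]]].
by exists mu.
Qed.

Lemma conv_norm_le (S : V -> Prop) (M : R) :
  (forall v, S v -> forall j, `|v 0 j| <= M) ->
  forall p, conv S p -> forall j, `|p 0 j| <= M.
Proof.
move=> SM; apply: conv_ind => // t u w /andP[t0 t1] uM wM j; rewrite !mxE.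
apply: le_trans (ler_normD _ _) _.
have t1' : 0 <= 1 - t by rewrite subr_ge0.
rewrite !normrM (ger0_norm t0) (ger0_norm t1').
by have := uM j; have := wM j; nra.
Qed.

(* In the triangle x h c, a point p of [x, h] and a point y of (h, c]: the
   segments [x, y] and [p, c] cross. *)
Lemma segments_cross (x h c : V) mu lam : 0 <= mu <= 1 -> 0 < lam <= 1 ->
  exists2 al, 0 <= al <= 1 & exists2 b, 0 <= b <= 1 &
    al *: x + (1 - al) *: (lam *: h + (1 - lam) *: c) =
    b *: (mu *: x + (1 - mu) *: h) + (1 - b) *: c.
Proof.
move=> /andP[mu0 mu1] /andP[lam0 lam1].
have D0 : 0 < 1 - mu + lam * mu by nra.
pose b := lam / (1 - mu + lam * mu).
have b01 : 0 <= b <= 1.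
  rewrite divr_ge0 ?(ltW lam0) ?(ltW D0) //= ler_pdivrMr // mul1r; nra.
exists (b * mu).
  rewrite mulr_ge0 ?(andP b01).1 //= mulrAC ler_pdivrMr // mul1r; nra.
exists b => //.
by apply/rowP => j; rewrite !mxE /b; field; rewrite gt_eqF.
Qed.

Lemma combination_cancel (y c c' : V) lam mu :
  0 <= lam <= 1 -> 0 <= mu <= 1 -> lam * mu != 1 ->
  y = mu *: (lam *: y + (1 - lam) *: c) + (1 - mu) *: c' ->
  exists2 s, 0 <= s <= 1 & y = s *: c + (1 - s) *: c'.
Proof.
move=> /andP[lam0 lam1] /andP[mu0 mu1] lmn1 ey.
have D0 : 0 < 1 - lam * mu.
  by rewrite subr_gt0 lt_neqAle lmn1 /=; nra.
exists (mu * (1 - lam) / (1 - lam * mu)).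
  rewrite divr_ge0 ?(ltW D0) ?mulr_ge0 ?subr_ge0 //= ler_pdivrMr // mul1r; nra.
apply/rowP => j; move/rowP: ey => /(_ j); rewrite !mxE => ey.
have ey' : (1 - lam * mu) * y 0 j = mu * (1 - lam) * c 0 j + (1 - mu) * c' 0 j.
  by transitivity (y 0 j - lam * mu * y 0 j); [ring | rewrite {1}ey; ring].
by apply: (mulfI (lt0r_neq0 D0)); rewrite ey'; field; rewrite gt_eqF.
Qed.

End ConvexHull.

Section LatticePoints.
Variable R : realFieldType.
Variable d : nat.
Notation E := (@emb R d).
Notation ES := (@embset R d).
Implicit Types (X H : 'rV[int]_d -> Prop) (h x y z : 'rV[int]_d).

Lemma emb_inj : injective E.
Proof. by move=> z z' /rowP ez; apply/rowP => j; have := ez j; rewrite !mxE => /intr_inj. Qed.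

Lemma mem_conv_emb X x : X x -> conv (ES X) (E x).
Proof. by move=> Xx; apply: mem_conv; exists x. Qed.

Lemma conv_emb_orC (P Q : 'rV[int]_d -> Prop) p :
  conv (ES (fun w => P w \/ Q w)) p -> conv (ES (fun w => Q w \/ P w)) p.
Proof. by apply: conv_sub => q [w PQw ->]; exists w => //; case: PQw; [right | left]. Qed.

Lemma eq_hiding X (P Q : 'rV[int]_d -> Prop) :
  (forall w, P w <-> Q w) -> hiding R X P -> hiding R X Q.
Proof.
move=> PQ [PX Ppair]; split=> [x /PQ | x y /PQ Px /PQ Py]; [exact: PX | exact: Ppair].
Qed.

Lemma aff_emb_nonempty X p : aff (ES X) p -> exists x, X x.
Proof.
case=> -[|n] [v [l [Sv l1 _]]]; last by have [x Xx _] := Sv ord0; exists x.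
by move: l1; rewrite big_ord0 => /eqP; rewrite eq_sym oner_eq0.
Qed.

Lemma conv_adjoin_decomp X x0 h p : X x0 ->
  conv (ES (fun w => w = h \/ X w)) p ->
  exists lam c, [/\ 0 <= lam <= 1, conv (ES X) c & p = lam *: E h + (1 - lam) *: c].
Proof.
move=> X0 Cp; apply: (conv_setU1_decomp (c0 := E x0)); first by exists x0.
by apply: conv_sub Cp => q [z [->|Xz] ->]; [left | right; exists z].
Qed.

Lemma conv_adjoin_trans X y z p :
  conv (ES (fun w => w = y \/ X w)) (E z) ->
  conv (ES (fun w => w = z \/ X w)) p -> conv (ES (fun w => w = y \/ X w)) p.
Proof.
move=> Cz; move: p; apply: conv_ind => [q [w [->|Xw] ->] // | t u w t01].
  by apply: mem_conv_emb; right.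
exact: conv_convex.
Qed.

Lemma conv_adjoin_antisym X x0 y z : lattice_convex R X -> X x0 -> ~ X y ->
  conv (ES (fun w => w = y \/ X w)) (E z) ->
  conv (ES (fun w => w = z \/ X w)) (E y) -> z = y.
Proof.
move=> LC X0 nXy Cz Cy.
have [lam [c [lam01 Cc ez]]] := conv_adjoin_decomp X0 Cz.
have [mu [c' [mu01 Cc' ey]]] := conv_adjoin_decomp X0 Cy.
have [lm1|lmn1] := eqVneq (lam * mu) 1.
  have lam1 : lam = 1 by move: lam01 mu01; nra.
  by apply: emb_inj; rewrite ez lam1 subrr scale0r addr0 scale1r.
rewrite ez in ey; have [s s01 ey'] := combination_cancel lam01 mu01 lmn1 ey.
by case: nXy; apply/LC; rewrite ey'; apply: conv_convex.
Qed.

Lemma hiding_conv_adjoin X H h y x : lattice_convex R X -> hiding R X H -> H h ->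
  ~ X y -> conv (ES (fun w => w = h \/ X w)) (E y) -> H x -> x <> h ->
  exists p, conv (ES (fun w => w = x \/ w = y)) p /\ conv (ES X) p.
Proof.
move=> LC [HX Hpair] Hh nXy Cy Hx xh.
have [x0 X0] := aff_emb_nonempty (HX h Hh).1.
have [lam [c [/andP[lam0 lam1] Cc ey]]] := conv_adjoin_decomp X0 Cy.
have lam01 : 0 < lam <= 1.
  rewrite lam1 lt_neqAle lam0 !andbT; apply/eqP => lam_eq0; apply: nXy; apply/LC.
  by rewrite ey -lam_eq0 scale0r add0r subr0 scale1r.
have [p [Cxh Cp]] := Hpair x h Hx Hh xh.
have [mu mu01 ep] : exists2 mu, 0 <= mu <= 1 & p = mu *: E x + (1 - mu) *: E h.
  by apply: conv_segment; apply: conv_sub Cxh => q [w [->|->] ->]; [left | right].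
have [al al01 [b b01 eal]] := segments_cross (E x) (E h) c mu01 lam01.
exists (al *: E x + (1 - al) *: E y); split.
  by apply: conv_convex => //; apply: mem_conv_emb; [left | right].
by rewrite ey eal -ep; apply: conv_convex.
Qed.

Lemma hiding_replace X H h y : lattice_convex R X -> hiding R X H -> H h ->
  observer R X y -> conv (ES (fun w => w = h \/ X w)) (E y) ->
  hiding R X (fun w => (H w /\ w <> h) \/ w = y).
Proof.
move=> LC HH Hh [nXy _] Cy; have [HX Hpair] := HH.
have meet := hiding_conv_adjoin LC HH Hh nXy Cy.
split=> [w [[Hw _] | ->] | u w [[Hu uh] | ->] [[Hw wh] | ->] uw]; first exact: HX.
- split=> //; have [x0 X0] := aff_emb_nonempty (HX h Hh).1.
  have [lam [c [_ Cc ->]]] := conv_adjoin_decomp X0 Cy.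
  by apply: aff_affine; [exact: (HX h Hh).1 | exact: conv_aff].
- exact: Hpair.
- exact: meet.
- have [p [Cwy Cp]] := meet w Hw wh.
  by exists p; split=> //; apply: conv_emb_orC.
- by case: uw.
Qed.

Lemma seq_norm_bound (s : seq 'rV[int]_d) :
  exists M : nat, forall w, w \in s -> forall j, `|w 0 j| <= M%:Z.
Proof.
elim: s => [|a s [M HM]]; first by exists 0%N.
exists (maxn (\max_j absz (a 0%R j)) M) => w; rewrite in_cons => /orP[/eqP -> | ws] j.
  by rewrite -abszE lez_nat; apply: leq_trans (leq_bigmax j) (leq_maxl _ _).
by rewrite (le_trans (HM w ws j)) // lez_nat leq_maxr.
Qed.

Lemma box_finite (M : nat) : exists L : {fset 'rV[int]_d},
  forall z, (forall j, `|z 0 j| <= M%:Z) -> z \in L.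
Proof.
pose row_of (f : {ffun 'I_d -> 'I_(M + M).+1}) := \row_j ((f j : nat)%:Z - M%:Z).
exists [fset row_of f | f : {ffun 'I_d -> 'I_(M + M).+1}]%fset => z zM.
pose f := [ffun j => (inord (absz (z 0 j + M%:Z)) : 'I_(M + M).+1)].
have -> : z = row_of f.
  apply/rowP => j; rewrite !mxE ffunE.
  have /andP[zlo zhi] : - M%:Z <= z 0 j <= M%:Z by rewrite -ler_norml.
  have zM0 : 0 <= z 0 j + M%:Z by lra.
  rewrite inordK; first by rewrite abszE ger0_norm // addrK.
  by rewrite ltnS -lez_nat abszE ger0_norm // PoszD; lra.
by rewrite in_imfset.
Qed.

Lemma conv_lattice_finite X (s : seq 'rV[int]_d) : (forall w, X w -> w \in s) ->
  exists L : {fset 'rV[int]_d}, forall z, conv (ES X) (E z) -> z \in L.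
Proof.
move=> Xs; have [M sM] := seq_norm_bound s; have [L LM] := box_finite M.
exists L => z Cz; apply: LM => j.
have : `|E z 0 j| <= (M%:Z)%:~R.
  apply: conv_norm_le Cz j => _ [w Xw ->] k.
  by rewrite mxE -intr_norm ler_int sM ?Xs.
by rewrite mxE -intr_norm ler_int.
Qed.

Lemma not_observer_witness X h : ~ X h -> ~ observer R X h ->
  exists z, [/\ z <> h, ~ X z & conv (ES (fun w => w = h \/ X w)) (E z)].
Proof.
move=> nXh nOh.
have [z nLCz] : exists z, ~ (conv (ES (fun w => X w \/ w = h)) (E z) <-> X z \/ z = h).
  by apply: not_all_ex_not => LC; apply: nOh.
have Cz : conv (ES (fun w => X w \/ w = h)) (E z).
  by apply: NNPP => nCz; apply: nLCz; split=> // XzP; apply: mem_conv_emb.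
have nXz : ~ (X z \/ z = h) by move=> XzP; apply: nLCz; split=> // _; exact: mem_conv_emb.
exists z; split; [by move=> zh; apply: nXz; right | by move=> Xz; apply: nXz; left |].
exact: conv_emb_orC.
Qed.

(* The step from h to z shrinks L: the lattice points of conv({z} u X) are
   lattice points of conv({h} u X) other than h. *)
Lemma observer_in_conv_adjoin X x0 h (L : {fset 'rV[int]_d}) :
  lattice_convex R X -> X x0 -> ~ X h ->
  (forall z, conv (ES (fun w => w = h \/ X w)) (E z) -> z \in L) ->
  exists2 y, observer R X y & conv (ES (fun w => w = h \/ X w)) (E y).
Proof.
move=> LC X0; have [n] := ubnP #|` L|.
elim: n => // n IH in h L *; rewrite ltnS => Ln nXh hL.
have [Oh | nOh] := classic (observer R X h).
  by exists h => //; apply: mem_conv_emb; left.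
have [z [zh nXz Cz]] := not_observer_witness nXh nOh.
have [|w Cw | y Oy Cy] := IH z (L `\ h)%fset _ nXz.
- by move: Ln; rewrite (cardfsD1 h) hL //; apply: mem_conv_emb; left.
- rewrite in_fsetD1 hL ?andbT; last exact: conv_adjoin_trans Cz Cw.
  by apply/eqP => wh; rewrite wh in Cw; exact: zh (conv_adjoin_antisym LC X0 nXh Cz Cw).
- by exists y => //; apply: conv_adjoin_trans Cz Cy.
Qed.

Lemma hiding_conv_adjoin_mem X H h y : lattice_convex R X -> hiding R X H -> H h ->
  ~ X y -> conv (ES (fun w => w = h \/ X w)) (E y) -> H y -> y = h.
Proof.
move=> LC HH Hh nXy Cy Hy; case: (eqVneq y h) => [// | /eqP yh].
have [p [Cyy Cp]] := hiding_conv_adjoin LC HH Hh nXy Cy Hy yh.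
suff pE : p = E y by case: nXy; apply/LC; rewrite -pE.
by apply: conv_singleton; apply: conv_sub Cyy => q [w [->|->] ->].
Qed.

Lemma exists_observer_hiding_set (X H s : {fset 'rV[int]_d}) :
  lattice_convex R (fun w => w \in X) -> hiding R (fun w => w \in X) (fun w => w \in H) ->
  (forall w, w \in H -> ~ observer R (fun w => w \in X) w -> w \in s) ->
  exists H' : {fset 'rV[int]_d},
    [/\ hiding R (fun w => w \in X) (fun w => w \in H'),
        forall w, w \in H' -> observer R (fun w => w \in X) w
      & #|` H'| = #|` H|].
Proof.
move=> LC; have [n] := ubnP #|` s|.
elim: n => // n IH in H s *; rewrite ltnS => sn HH nOs.
have [[h [hH nOh]] | allO] := classic (exists h, h \in H /\ ~ observer R (fun w => w \in X) h);
  last first.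
  by exists H; split=> // w wH; apply: NNPP => nOw; apply: allO; exists w.
have [affh nXh] := HH.1 h hH.
have [x0 X0] := aff_emb_nonempty affh.
have hXs : forall w, w = h \/ w \in X -> w \in h :: X.
  by move=> w [-> | wX]; rewrite in_cons ?eqxx ?wX ?orbT.
have [L hL] := conv_lattice_finite hXs.
have [y Oy Cy] := observer_in_conv_adjoin LC X0 nXh hL.
have yH : y \notin H.
  by apply/negP => /(hiding_conv_adjoin_mem LC HH hH Oy.1 Cy) yh; apply: nOh; rewrite -yh.
have [||| H' [H'H H'O H'card]] := IH (y |` (H `\ h))%fset (s `\ h)%fset.
- by move: sn; rewrite (cardfsD1 h) nOs.
- apply: eq_hiding (hiding_replace LC HH hH Oy Cy) => w.
  rewrite in_fset1U in_fsetD1; split=> [[[wH /eqP wh] | ->] | ]; first by rewrite wh wH orbT.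
    by rewrite eqxx.
  by case/orP => [/eqP -> | /andP[/eqP wh wH]]; [right | left].
- move=> w; rewrite in_fset1U in_fsetD1 => /orP[/eqP -> // | /andP[wh wH]] nOw.
  by rewrite in_fsetD1 wh nOs.
- by exists H'; split; rewrite // H'card cardfsU1 in_fsetD1 (negbTE yH) andbF (cardfsD1 h H) hH.
Qed.

End LatticePoints.

Local Open Scope fset_scope.

Theorem lemma2p6 (R : realFieldType) (d : nat) (X : {fset 'rV[int]_d}) :
  lattice_convex R (fun w => w \in X) ->
  (* main claim: replacing h by an observer y in conv({h} ∪ X) *)
  (forall (H : 'rV[int]_d -> Prop) (h : 'rV[int]_d),
     hiding R (fun w => w \in X) H -> H h -> ~ observer R (fun w => w \in X) h ->
     forall y : 'rV[int]_d,
       observer R (fun w => w \in X) y ->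
       conv (@embset R d (fun w => w = h \/ w \in X)) (@emb R d y) ->
       hiding R (fun w => w \in X) (fun w => (H w /\ w <> h) \/ w = y)) /\
  (* in particular: a maximum size hiding set can be taken inside obs(X) *)
  (forall H : {fset 'rV[int]_d},
     hiding R (fun w => w \in X) (fun w => w \in H) ->
     (forall H' : 'rV[int]_d -> Prop, hiding R (fun w => w \in X) H' ->
        exists s : {fset 'rV[int]_d},
          (forall w, H' w <-> w \in s) /\ (#|` s| <= #|` H|)%N) ->
     exists H' : {fset 'rV[int]_d},
       [/\ hiding R (fun w => w \in X) (fun w => w \in H'),
           (forall w, w \in H' -> observer R (fun w => w \in X) w)
         & #|` H'| = #|` H|]).
Proof.
move=> LC; split=> [H h HH Hh _ y Oy Cy | H HH _].
- exact: hiding_replace Oy Cy.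
- exact: (exists_observer_hiding_set (s := H) LC HH (fun w wH _ => wH)).
Qed.
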